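(* Write $\chi_n^*(M_{1,2}(F))=\sum m_{\langle\lambda\rangle}\chi_{\langle\lambda\rangle}$, the sum over multipartitions $\langle\lambda\rangle=(\lambda(1),\lambda(2),\lambda(3),\lambda(4))\vdash n$ with $h(\lambda(1))\le2$, $h(\lambda(2))\le3$, $h(\lambda(3))\le2$, $h(\lambda(4))\le2$. If $\langle\lambda\rangle=(\lambda(1),\emptyset,\lambda(3),\lambda(4))$ with $\lambda(3)=(w_1+w_2,w_2)\neq\emptyset$, $\lambda(4)=(\rho_1+\rho_2,\rho_2)\neq\emptyset$ ($w_i,\rho_i\ge0$ integers) and $|w_1-\rho_1|\le2$, then $m_{\langle\lambda\rangle}\neq0$.
   Context: $F$ is a field of characteristic zero. $M_{1,2}(F)$ is $M_3(F)$ with $\mathbb{Z}_2$-grading with even part spanned by $e_{11},e_{22},e_{23},e_{32},e_{33}$, odd part by $e_{12},e_{13},e_{21},e_{31}$, and orthosymplectic superinvolution $*$ sending the matrix with rows $(a,b,c),(d,e,f),(g,h,i)$ to the matrix with rows $(a,-g,d),(c,i,-f),(-b,-h,e)$. Its even symmetric, even skew, odd symmetric, odd skew parts are $\mathrm{span}\{e_{11},e_{22}+e_{33}\}$, $\mathrm{span}\{e_{22}-e_{33},e_{23},e_{32}\}$, $\mathrm{span}\{e_{12}-e_{31},e_{13}+e_{21}\}$, $\mathrm{span}\{e_{12}+e_{31},e_{13}-e_{21}\}$. In the free $*$-superalgebra on variables $y_i^+,y_i^-,z_i^+,z_i^-$ (even symmetric, even skew, odd symmetric, odd skew), a $*$-identity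 is a polynomial vanishing under all substitutions of the variables by elements of the corresponding parts; $Id_2^*$ denotes the set of them. $P_n^*$ is the span of the monomials $w_{\sigma(1)}\cdots w_{\sigma(n)}$, $\sigma\in S_n$, $w_i\in\{y_i^+,y_i^-,z_i^+,z_i^-\}$. The group $\mathbb{H}_n=(\mathbb{Z}_2\times\mathbb{Z}_2)\wr S_n$, with $\mathbb{Z}_2\times\mathbb{Z}_2=\{1,*,\zeta,*\zeta\}$, acts on $P_n^*$: $h=(a_1,\dots,a_n;\sigma)$ sends $y_i^+\mapsto y_{\sigma(i)}^+$, $y_i^-\mapsto \pm y_{\sigma(i)}^-$ (sign $+$ iff $a_{\sigma(i)}\in\{1,\zeta\}$), $z_i^+\mapsto\pm z_{\sigma(i)}^+$ ($+$ iff $a_{\sigma(i)}\in\{1,*\}$), $z_i^-\mapsto\pm z_{\sigma(i)}^-$ ($+$ iff $a_{\sigma(i)}\in\{1,*\zeta\}$). The character of $P_n^*/(P_n^*\cap Id_2^*(M_{1,2}(F)))$ is the $n$-th $*$-cocharacter $\chi_n^*(M_{1,2}(F))$. Irreducible $\mathbb{H}_n$-characters $\chi_{\langle\lambda\rangle}$ correspond to multipartitions $\langle\lambda\rangle=(\lambda(1),\dots,\lambda(4))$, $\lambda(i)\vdash n_i$, $\sum n_i=n$, with $\lambda(1),\dots,\lambda(4)$ corresponding to the variable types $y^+,y^-,z^+,z^-$; equivalently $m_{\langle\lambda\rangle}$ is the multiplicity of $\chi_{\lambda(1)}\otimes\cdots\otimes\chi_{\lambda(4)}$ in the $S_{n_1}\times\cdots\times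 S_{n_4}$-character of the multilinear polynomials with $n_1,\dots,n_4$ variables of the four types modulo identities. $h(\mu)$ is the height of a partition $\mu$; $\emptyset$ is the empty partition. *)

From HB Require Import structures.
From mathcomp Require Import all_boot all_order all_fingroup all_algebra.
From mathcomp Require Import boolp.

Set Implicit Arguments.
Unset Strict Implicit.
Unset Printing Implicit Defensive.

Import GRing.Theory.
Local Open Scope ring_scope.

Section Defs.
Variable F : fieldType.

(* indices 0,1,2 stand for 1,2,3; index 0 has degree 1, indices 1,2 degree 0 *)
Definition mdeg (i : 'I_3) : bool := (val i == 0)%N.

Definition meven (A : 'M[F]_3) : bool :=
  [forall i, forall j, (mdeg i != mdeg j) ==> (A i j == 0)].
Definition modd (A : 'M[F]_3) : bool :=
  [forall i, forall j, (mdeg i == mdeg j) ==> (A i j == 0)].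

(* orthosymplectic superinvolution:
   rows (a,b,c),(d,e,f),(g,h,i)  |->  rows (a,-g,d),(c,i,-f),(-b,-h,e) *)
Definition mstar (A : 'M[F]_3) : 'M[F]_3 :=
  let e (r c : nat) : F := A (inord r) (inord c) in
  \matrix_(i < 3, j < 3)
    match val i, val j with
    | 0, 0 => e 0 0 | 0, 1 => - e 2 0 | 0, _ => e 1 0
    | 1, 0 => e 0 2 | 1, 1 => e 2 2   | 1, _ => - e 1 2
    | _, 0 => - e 0 1 | _, 1 => - e 2 1 | _, _ => e 1 1
    end%N.

(* kinds: 0 = y^+ (even sym), 1 = y^- (even skew),
          2 = z^+ (odd sym),  3 = z^- (odd skew) *)
Definition in_part (k : nat) (A : 'M[F]_3) : bool :=
  match k with
  | 0 => meven A && (mstar A == A)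
  | 1 => meven A && (mstar A == - A)
  | 2 => modd A && (mstar A == A)
  | _ => modd A && (mstar A == - A)
  end%N.

(* An element of P_n (in the fixed variables x_0..x_{n-1}) is given by its
   coefficient on each monomial x_{s 0} x_{s 1} ... x_{s (n-1)}, s in S_n.  *)
Notation mpoly_ml n := {ffun {perm 'I_n} -> F^o}.

Definition ml_eval n (f : mpoly_ml n) (a : 'I_n -> 'M[F]_3) : 'M[F]_3 :=
  \sum_(s : {perm 'I_n}) f s *: \prod_(k < n) a (s k).

Definition is_star_id n (kind : 'I_n -> nat) (f : mpoly_ml n) : Prop :=
  forall a : 'I_n -> 'M[F]_3, (forall i, in_part (kind i) (a i)) ->
    ml_eval f a = 0.

(* left action of S_n on P_n by renaming variables x_i |-> x_{t i}:
   the monomial indexed by s goes to the one indexed by (t o s) = s * t *)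
Definition ml_act n (t : {perm 'I_n}) (f : mpoly_ml n) : mpoly_ml n :=
  [ffun s => f (s * t^-1)%g].

(* the maximal number of elements of V linearly independent modulo I
   (the bound N is any upper bound for the dimension of the ambient space) *)
Definition qdim (T : lmodType F) (V : T -> Prop) (I : T -> Prop) (N : nat)
  : nat :=
  \max_(d < N.+1 | `[< exists s : d.-tuple T, (forall i, V (tnth s i)) /\
        forall c : d.-tuple F,
          I (\sum_(i < d) tnth c i *: tnth s i) -> forall i, tnth c i = 0 >])
    (val d).

End Defs.

Definition is_partition (s : seq nat) : bool :=
  sorted geq s && all (fun x => 0 < x)%N s.

Definition two_part (a b : nat) : seq nat := [seq x <- [:: a + b; b] | 0 < x]%N.

(* cells (j, r, c) of the multipartition L = (L_0, ..., L_{k-1}), listed block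
   by block, row by row; the i-th cell receives variable x_i, which is of
   kind j (block j).  This is the canonical (row-reading) multitableau. *)
Definition mcells (L : seq (seq nat)) : seq (nat * nat * nat) :=
  flatten [seq flatten [seq [seq (j, r, c) | c <- iota 0 (nth 0%N (nth [::] L j) r)]
                           | r <- iota 0 (size (nth [::] L j))]
          | j <- iota 0 (size L)].

Section Mult.
Variable F : fieldType.
Variable L : seq (seq nat).

Local Notation n := (size (mcells L)).
Definition mcell (i : 'I_n) : nat * nat * nat := nth (0, 0, 0)%N (mcells L) i.
Definition mkind (i : 'I_n) : nat := (mcell i).1.1.
Definition mrow (i : 'I_n) : nat * nat := ((mcell i).1.1, (mcell i).1.2).
Definition mcol (i : 'I_n) : nat * nat := ((mcell i).1.1, (mcell i).2).

Definition mRowG : {set {perm 'I_n}} := [set p : {perm 'I_n} | [forall i, mrow (p i) == mrow i]].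
Definition mColG : {set {perm 'I_n}} := [set q : {perm 'I_n} | [forall i, mcol (q i) == mcol i]].

Definition myoung (f : {ffun {perm 'I_n} -> F^o}) : {ffun {perm 'I_n} -> F^o} :=
  \sum_(p in mRowG) \sum_(q in mColG)
     ((-1) ^+ odd_perm q) *: ml_act p (ml_act q f).

(* multiplicity m_<L> of chi_{L_0} (x) ... (x) chi_{L_{k-1}} in the
   S_{n_1} x ... x S_{n_k}-character of P_{n_1,...,n_k} / (P ∩ Id^*_2):
   = dim Hom(F[G] e, P/(P∩Id)) = dim e (P / (P ∩ Id)) = dim eP / (eP ∩ Id) *)
Definition star_mult : nat :=
  qdim (fun g : {ffun {perm 'I_n} -> F^o} => exists f, g = myoung f)
       (is_star_id (fun i => mkind i)) #|{perm 'I_n}|.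
End Mult.

(* It suffices to find one monomial f and one admissible substitution at which
   the Young symmetrizer e of the canonical multitableau, applied to f, does
   not vanish.  Every variable is replaced by a matrix depending only on its
   block and row: e22+e33 and e11 for y^+, Z = (e12-e31)+(e13+e21) and e12-e31
   for z^+, T = (e13-e21)-(e12+e31) and e12+e31 for z^-.  Row permutations then
   act trivially.  The cells of f are ordered so that, multiplied on the left
   by e22, the running product is a multiple of e22 at the top of every
   two-cell column; a column permutation q <> 1 puts a row-1 matrix there, and
   e22 annihilates all of them, so only q = 1 survives.  Its term is a nonzero
   multiple of e21 (ZT)^m X^d1 Y^d2 with {X, Y} = {Z, T} and d1 + d2 <= 1, the
   latter because |w1 - r1| <= 2; this is nonzero since
   e21 ZT = e21 TZ = -2 e21 and 2 is invertible. *)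

From HB Require Import structures.
From mathcomp Require Import all_boot all_order all_fingroup all_algebra.
From mathcomp Require Import boolp ring zify.

Set Implicit Arguments.
Unset Strict Implicit.
Unset Printing Implicit Defensive.

Import GRing.Theory.

(** * Multilinear polynomials and Young symmetrizers *)

Section MultilinearEval.
Local Open Scope ring_scope.
Variables (F : fieldType) (n : nat).
Implicit Types (f : {ffun {perm 'I_n} -> F^o}) (a b : 'I_n -> 'M[F]_3).

Lemma ml_eval_sum I (r : seq I) (P : pred I) (g : I -> {ffun {perm 'I_n} -> F^o}) a :
  ml_eval (\sum_(i <- r | P i) g i) a = \sum_(i <- r | P i) ml_eval (g i) a.
Proof.
rewrite /ml_eval; under eq_bigr do rewrite sum_ffunE scaler_suml.
by rewrite exchange_big.
Qed.

Lemma ml_evalZ c f a : ml_eval (c *: f) a = c *: ml_eval f a.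
Proof.
rewrite /ml_eval scaler_sumr; apply: eq_bigr => s _.
by rewrite ffunE scalerA.
Qed.

Lemma ml_eval_act t f a : ml_eval (ml_act t f) a = ml_eval f (a \o t).
Proof.
rewrite /ml_eval (reindex_inj (@mulIg _ t)) /=; apply: eq_bigr => s _.
rewrite ffunE mulgK; congr (_ *: _); apply: eq_bigr => k _.
by rewrite permM.
Qed.

Lemma eq_ml_eval f a b : a =1 b -> ml_eval f a = ml_eval f b.
Proof.
by move=> eq_ab; apply: eq_bigr => s _; congr (_ *: _); apply: eq_bigr => k _.
Qed.

Definition ml_monomial (s0 : {perm 'I_n}) : {ffun {perm 'I_n} -> F^o} :=
  [ffun s => (s == s0)%:R].

Lemma ml_eval_monomial s0 a :
  ml_eval (ml_monomial s0) a = \prod_(k < n) a (s0 k).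
Proof.
rewrite /ml_eval (bigD1 s0) //= [X in _ + X]big1 ?addr0; first by rewrite ffunE eqxx scale1r.
by move=> s /negbTE s_neq; rewrite ffunE s_neq scale0r.
Qed.

End MultilinearEval.

Section QuotientDimension.
Local Open Scope ring_scope.
Variables (F : fieldType) (T : lmodType F).

Lemma qdim_gt0 (V I : T -> Prop) N g :
  (0 < N)%N -> V g -> ~ I g -> (forall c, c != 0 -> I (c *: g) -> I g) ->
  (0 < qdim V I N)%N.
Proof.
move=> N_gt0 Vg notIg IZ; pose d1 : 'I_N.+1 := @Ordinal N.+1 1 N_gt0.
apply: leq_trans (leq_bigmax_cond d1 _) => //=.
apply/asboolP; exists [tuple g]; split=> [i|c]; first by rewrite (ord1 i) tnth0.
rewrite big_ord1 tnth0 => Icg i; rewrite (ord1 i).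
by apply: contra_notP notIg => c_neq0; apply: IZ Icg; apply/eqP.
Qed.

End QuotientDimension.

Section YoungSymmetrizer.
Local Open Scope ring_scope.
Variables (F : fieldType) (L : seq (seq nat)).
Local Notation n := (size (mcells L)).
Implicit Types (f : {ffun {perm 'I_n} -> F^o}) (a : 'I_n -> 'M[F]_3).

Lemma star_mult_gt0 f a :
  (forall i, in_part (mkind i) (a i)) -> ml_eval (myoung f) a != 0 ->
  (0 < star_mult F L)%N.
Proof.
move=> a_kind eval_neq0; apply: qdim_gt0; first by apply/card_gt0P; exists 1%g.
- by exists f.
- by move=> id_e; rewrite (id_e a a_kind) eqxx in eval_neq0.
move=> c c_neq0 id_cg b b_kind; apply/eqP.
by have /eqP := id_cg b b_kind; rewrite ml_evalZ scaler_eq0 (negbTE c_neq0).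
Qed.

Lemma ml_eval_myoung f a : (forall p i, p \in mRowG L -> a (p i) = a i) ->
  ml_eval (myoung f) a =
  (\sum_(q in mColG L) (-1) ^+ odd_perm q *: ml_eval f (a \o q)) *+ #|mRowG L|.
Proof.
move=> a_row; rewrite ml_eval_sum -sumr_const; apply: eq_bigr => p pR.
rewrite ml_eval_sum; apply: eq_bigr => q _.
rewrite ml_evalZ !ml_eval_act; congr (_ *: _); apply: eq_ml_eval => i /=.
exact: a_row.
Qed.

End YoungSymmetrizer.

(** * Products against a left eigenvector *)

Section LeftEigenProducts.
Local Open Scope ring_scope.
Variables (R : pzRingType) (A : lalgType R) (e : A) (T : eqType) (W : T -> A).

Lemma left_eig_prod (P : pred R) s :
  P 1 -> (forall a b, P a -> P b -> P (a * b)) ->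
  (forall x, x \in s -> exists2 c, P c & e * W x = c *: e) ->
  exists2 c, P c & e * \prod_(x <- s) W x = c *: e.
Proof.
move=> P1 PM; elim: s => [_|x s IHs eig_s]; first by exists 1; rewrite ?big_nil ?mulr1 ?scale1r.
have [c Pc eig_x] := eig_s x (mem_head _ _).
have [|d Pd eig_prod] := IHs; first by move=> y ys; apply/eig_s/mem_behead.
by exists (c * d); rewrite ?PM // big_cons mulrA eig_x -scalerAl eig_prod scalerA.
Qed.

Lemma left_eig_prod_eq0 s :
  (forall x, x \in s -> exists c, e * W x = c *: e) ->
  (exists2 x, x \in s & e * W x = 0) -> e * \prod_(x <- s) W x = 0.
Proof.
elim: s => [_ [] //|y s IHs eig_s [x]].
rewrite inE big_cons mulrA => /predU1P [-> ->|xs kill_x]; first by rewrite mul0r.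
have [c ->] := eig_s y (mem_head _ _).
rewrite -scalerAl IHs ?scaler0 //; last by exists x.
by move=> z zs; apply/eig_s/mem_behead.
Qed.

End LeftEigenProducts.

Fixpoint interleave (T : Type) (s t : seq T) : seq T :=
  match s, t with
  | x :: s', y :: t' => x :: y :: interleave s' t'
  | [::], _ => t
  | _, [::] => s
  end.

Lemma perm_interleave (T : eqType) (s t : seq T) : perm_eq (interleave s t) (s ++ t).
Proof.
elim: s t => [|x s IHs] [|y t] //=; first by rewrite cats0.
by rewrite perm_cons perm_sym -(cat1s y t) perm_catCA perm_cons perm_sym IHs.
Qed.

Section InterleavedProducts.
Local Open Scope ring_scope.
Variables (R : pzSemiRingType) (T : eqType) (G : T -> R).

Lemma prod_const_seq s X : {in s, forall x, G x = X} -> \prod_(x <- s) G x = X ^+ size s.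
Proof.
by move=> GX; rewrite (eq_big_seq (fun=> X)) // big_const_seq count_predT iter_mulr_1.
Qed.

Lemma prod_interleave s t X Y : {in s, forall x, G x = X} -> {in t, forall y, G y = Y} ->
  \prod_(x <- interleave s t) G x =
    (X * Y) ^+ minn (size s) (size t) * (X ^+ (size s - size t) * Y ^+ (size t - size s)).
Proof.
elim: s t => [|x s IHs] [|y t] GX GY /=.
- by rewrite big_nil !expr0 !mul1r.
- by rewrite (prod_const_seq GY) /= min0n !expr0 !mul1r subn0.
- by rewrite (prod_const_seq GX) /= minn0 !expr0 !mul1r mulr1 subn0.
rewrite !big_cons GX ?GY ?mem_head // IHs; last 2 first.
- by move=> z zs; apply/GX/mem_behead.
- by move=> z zs; apply/GY/mem_behead.
by rewrite minnSS !subSS exprS !mulrA.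
Qed.

End InterleavedProducts.

Lemma flatten_map_nil (S : eqType) (T : Type) (f : S -> seq T) s :
  {in s, forall x, f x = [::]} -> flatten (map f s) = [::].
Proof.
by elim: s => //= x s IHs f0; rewrite f0 ?mem_head // IHs // => y ys; apply/f0/mem_behead.
Qed.

(** * The substituted matrices *)

Section Matrices.
Local Open Scope ring_scope.
Variable F : fieldType.

(* [em i j] is the matrix unit e_{i+1, j+1} of the paper. *)
Definition em (i j : nat) : 'M[F]_3 :=
  \matrix_(a < 3, b < 3) ((a == i :> nat) && (b == j :> nat))%:R.

(* The matrix substituted for the variables in row [r] of block [j]; the
   blocks 0, 2, 3 hold y^+, z^+, z^- and block 1 (y^-) is empty here. *)
Definition tabval (j r : nat) : 'M[F]_3 :=
  match j, r with
  | 0%N, 0%N => em 1 1 + em 2 2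
  | 0%N, _ => em 0 0
  | 2%N, 0%N => em 0 1 - em 2 0 + (em 0 2 + em 1 0)
  | 2%N, _ => em 0 1 - em 2 0
  | 3%N, 0%N => em 0 2 - em 1 0 - (em 0 1 + em 2 0)
  | 3%N, _ => em 0 1 + em 2 0
  | _, _ => 0
  end.

Lemma in_part_tabval j r : in_part j (tabval j r).
Proof.
rewrite /in_part /meven /modd.
case: j => [|[|[|[|j]]]]; case: r => [|r] /=; apply/andP; split.
all: try (apply/forallP => -[[|[|[|?]]] ?] //; apply/forallP => -[[|[|[|?]]] ?] //;
  apply/implyP => _; rewrite !mxE /=; apply/eqP; ring).
all: apply/eqP/matrixP => a b; rewrite /mstar !mxE ?inordK //.
all: case: a b => [[|[|[|?]]] ?] [[|[|[|?]]] ?] //=; ring.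
Qed.

Lemma em_neq0 i j : (i < 3)%N -> (j < 3)%N -> em i j != 0.
Proof.
move=> lt_i3 lt_j3; apply/eqP => /matrixP /(_ (Ordinal lt_i3) (Ordinal lt_j3)).
by rewrite !mxE /= !eqxx => /eqP; rewrite oner_eq0.
Qed.

Local Notation e22 := (em 1 1).
Local Notation e21 := (em 1 0).

Ltac mx3 := rewrite -?mulmxE; apply/matrixP => -[[|[|[|?]]] ?] -[[|[|[|?]]] ?] //;
  rewrite !mxE ?big_ord_recr ?big_ord0 /= ?mxE /=; ring.

Lemma e22_tabvalS j r : e22 * tabval j r.+1 = 0.
Proof. by case: j => [|[|[|[|j]]]] /=; rewrite ?mulr0 //; mx3. Qed.

Lemma e22_tabval0 r : e22 * tabval 0 r = (r == 0)%N%:R *: e22.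
Proof. by case: r => [|r]; rewrite ?e22_tabvalS ?scale0r ?scale1r //; mx3. Qed.

Lemma e21_tabval0 r : e21 * tabval 0 r = (r != 0)%N%:R *: e21.
Proof. by case: r => [|r]; rewrite ?scale0r ?scale1r; mx3. Qed.

Lemma e22_tabval_odd0 j : j \in [:: 2; 3]%N ->
  e22 * tabval j 0 = (if j == 2%N then 1 else -1) *: e21.
Proof. by rewrite !inE => /orP [] /eqP ->; rewrite ?scale1r ?scaleN1r; mx3. Qed.

Lemma e21_tabval_oddS j r : j \in [:: 2; 3]%N -> e21 * tabval j r.+1 = e22.
Proof. by rewrite !inE => /orP [] /eqP ->; mx3. Qed.

Lemma e22_colblock j M d r : j \in [:: 2; 3]%N -> e21 * M = d *: e21 ->
  e22 * (tabval j 0 * M * tabval j r.+1) = ((if j == 2%N then 1 else -1) * d) *: e22.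
Proof.
move=> j23 e21M; rewrite !mulrA e22_tabval_odd0 // -!scalerAl e21M -scalerAl.
by rewrite e21_tabval_oddS // scalerA.
Qed.

Lemma e21_tabval20 : e21 * tabval 2 0 = em 1 1 + em 1 2. Proof. mx3. Qed.
Lemma e21_tabval30 : e21 * tabval 3 0 = em 1 2 - em 1 1. Proof. mx3. Qed.

Lemma e21_alternating_neq0 j k m d1 d2 :
  (j, k) \in [:: (2, 3); (3, 2)]%N -> 2%:R != 0 :> F -> (d1 + d2 <= 1)%N ->
  e21 * ((tabval j 0 * tabval k 0) ^+ m * (tabval j 0 ^+ d1 * tabval k 0 ^+ d2)) != 0.
Proof.
move=> jk two_neq0 d12.
have e21_jk : e21 * (tabval j 0 * tabval k 0) = - 2%:R *: e21.
  by move: jk; rewrite !inE => /orP [] /eqP [-> ->];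
    rewrite mulrA ?e21_tabval20 ?e21_tabval30; mx3.
have e21_pow i : e21 * (tabval j 0 * tabval k 0) ^+ i = (- 2%:R) ^+ i *: e21.
  elim: i => [|i IHi]; first by rewrite expr0 mulr1 scale1r.
  by rewrite exprSr mulrA IHi -scalerAl e21_jk scalerA exprSr.
have e21_20 : e21 * tabval 2 0 != 0.
  rewrite e21_tabval20; apply/eqP => /matrixP /(_ (@Ordinal 3 1 isT) (@Ordinal 3 1 isT)).
  by rewrite !mxE /= addr0 => /eqP; rewrite oner_eq0.
have e21_30 : e21 * tabval 3 0 != 0.
  rewrite e21_tabval30; apply/eqP => /matrixP /(_ (@Ordinal 3 1 isT) (@Ordinal 3 2 isT)).
  by rewrite !mxE /= subr0 => /eqP; rewrite oner_eq0.
rewrite mulrA e21_pow -scalerAl scaler_eq0 negb_or expf_neq0 ?oppr_eq0 //=.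
move: jk; rewrite !inE => /orP [] /eqP [-> ->];
  case: d1 d2 d12 => [|[|//]] [|[|//]] //= _; rewrite ?mulr1 ?mul1r ?em_neq0 //.
Qed.

End Matrices.

(** * Cells of the multitableau *)

Notation cell := (nat * nat * nat)%type.

Definition seg (j r l : nat) : seq cell := [seq (j, r, c) | c <- iota 0 l].

Lemma seg_uniq j r l : uniq (seg j r l).
Proof. by rewrite map_inj_uniq ?iota_uniq // => x y [->]. Qed.

Lemma mem_seg x j r l : (x \in seg j r l) = [&& x.1.1 == j, x.1.2 == r & x.2 < l].
Proof.
case: x => [[j' r'] c] /=; apply/mapP/and3P => [[c'] | [/eqP-> /eqP-> lt_c]].
  by rewrite mem_iota add0n => lt_c' [-> -> ->].
by exists c; rewrite // mem_iota.
Qed.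

Lemma has_seg_seg j r l j' r' l' :
  (j, r) != (j', r') -> has (mem (seg j r l)) (seg j' r' l') = false.
Proof.
move=> neq; apply/hasPn => x /mapP [c _ ->]; rewrite /= mem_seg /=.
by apply: contra neq => /and3P [/eqP <- /eqP <- _].
Qed.

Lemma mcells_two_rows (lam1 : seq nat) w1 w2 r1 r2 :
  size lam1 <= 2 -> 0 < w1 + w2 -> 0 < r1 + r2 ->
  mcells [:: lam1; [::]; two_part w1 w2; two_part r1 r2] =
  seg 0 0 (nth 0 lam1 0) ++ seg 0 1 (nth 0 lam1 1) ++ seg 2 0 (w1 + w2) ++
  seg 2 1 w2 ++ seg 3 0 (r1 + r2) ++ seg 3 1 r2.
Proof.
have rows2 (s : seq nat) j : size s <= 2 ->
    flatten [seq [seq (j, r, c) | c <- iota 0 (nth 0 s r)] | r <- iota 0 (size s)] =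
    seg j 0 (nth 0 s 0) ++ seg j 1 (nth 0 s 1).
  by case: s => [|x [|y [|z s]]] //= _; rewrite ?cats0.
have two_part_size a b : size (two_part a b) <= 2.
  by rewrite /two_part /=; case: (0 < a + b); case: (0 < b).
move=> lam1_le2 w_gt0 r_gt0; rewrite /mcells /= !rows2 ?two_part_size //.
rewrite /two_part /= w_gt0 r_gt0 /= !catA cats0.
by case: w2 {w_gt0} => [|w2]; case: r2 {r_gt0} => [|r2]; rewrite ?addn0.
Qed.

(** * The monomial and its evaluation *)

Section Monomial.
Variables (L : seq (seq nat)) (A B w1 w2 r1 r2 : nat).
Local Notation cs := (mcells L).
Local Notation n := (size cs).
Hypothesis cellsL : cs = seg 0 0 A ++ seg 0 1 B ++ seg 2 0 (w1 + w2) ++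
  seg 2 1 w2 ++ seg 3 0 (r1 + r2) ++ seg 3 1 r2.
Hypothesis w_gt0 : 0 < w1 + w2.

Lemma cells_uniq : uniq cs.
Proof. by rewrite cellsL !cat_uniq !has_cat !seg_uniq !has_seg_seg. Qed.

Lemma mem_cells x : (x \in cs) =
  [|| [&& x.1.1 == 0, x.1.2 == 0 & x.2 < A], [&& x.1.1 == 0, x.1.2 == 1 & x.2 < B],
      [&& x.1.1 == 2, x.1.2 == 0 & x.2 < w1 + w2], [&& x.1.1 == 2, x.1.2 == 1 & x.2 < w2],
      [&& x.1.1 == 3, x.1.2 == 0 & x.2 < r1 + r2] | [&& x.1.1 == 3, x.1.2 == 1 & x.2 < r2]].
Proof. by rewrite cellsL !mem_cat !mem_seg. Qed.

Lemma cells_row_le1 x : x \in cs -> x.1.2 <= 1.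
Proof. by rewrite mem_cells => /or4P [| | |/or3P []] /and3P [_ /eqP -> _]. Qed.

Lemma cells_row1 j c : (j, 1, c) \in cs ->
  [\/ j = 0 /\ c < B, j = 2 /\ c < w2 | j = 3 /\ c < r2].
Proof.
rewrite mem_cells /=; case: j => [|[|[|[|j]]]] //=; rewrite ?andbF ?orbF ?andbT ?orFb.
- by constructor 1.
- by constructor 2.
- by constructor 3.
Qed.

(* The cells are read in the order [word]: the row-0 y^+ cells one at a time,
   then the two-cell z^+ and z^- columns top to bottom, and finally ([tail])
   the one-cell z^+ and z^- columns alternately, starting with the more
   numerous kind.  After a left factor e22, a row-0 y^+ cell gives back e22,
   the top of a z-column gives +-e21 and its bottom brings e21 back to e22.
   The row-1 y^+ cells (value e11) fix e21, so they are read while the running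
   product is e21: inside the first z^+ column when there is no one-cell
   z-column, right after the first one-cell z-column otherwise. *)
Definition Y1 := seg 0 1 B.
Definition y1_late := 0 < w1 + r1.
Definition colblock j c (mid : seq cell) : seq cell := (j, 0, c) :: mid ++ [:: (j, 1, c)].
Definition zmid c := if (c == 0) && ~~ y1_late then Y1 else [::].
Definition col_blocks : seq (seq cell) :=
  [seq [:: x] | x <- seg 0 0 A] ++ [seq colblock 2 c (zmid c) | c <- iota 0 w2] ++
  [seq colblock 3 c [::] | c <- iota 0 r2].
Definition Zs := [seq (2, 0, c) | c <- iota w2 w1].
Definition Ts := [seq (3, 0, c) | c <- iota r2 r1].
Definition Xs := if r1 <= w1 then Zs else Ts.
Definition Ys := if r1 <= w1 then Ts else Zs.
Definition tail := take 1 Xs ++ (if y1_late then Y1 else [::]) ++ interleave (drop 1 Xs) Ys.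
Definition word := flatten col_blocks ++ tail.

Lemma perm_colblocks j mids s :
  perm_eq (flatten [seq colblock j c (mids c) | c <- s])
          (flatten (map mids s) ++ [seq (j, 0, c) | c <- s] ++ [seq (j, 1, c) | c <- s]).
Proof.
elim: s => //= c s /seq.permP IHs; apply/seq.permP => P; move: (IHs P).
by rewrite /colblock /= !count_cat /= !count_cat /=; lia.
Qed.

Lemma flatten_zmid : flatten (map zmid (iota 0 w2)) = if y1_late then [::] else Y1.
Proof.
rewrite /zmid /y1_late; case Ew: w2 => [|k] /=.
  by move: w_gt0; rewrite Ew addn0 => w1_gt0; rewrite ltn_addr.
rewrite flatten_map_nil ?cats0 => [|c]; first by case: (0 < w1 + r1).
by rewrite mem_iota; case: c.
Qed.

Lemma perm_word : perm_eq word cs.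
Proof.
have perm_tail : perm_eq tail ((if y1_late then Y1 else [::]) ++ Zs ++ Ts).
  rewrite /tail perm_catCA perm_cat2l (perm_catl _ (perm_interleave _ _)).
  by rewrite catA cat_take_drop /Xs /Ys; case: ifP => _; rewrite // perm_catC.
have perm_z : perm_eq (flatten [seq colblock 2 c (zmid c) | c <- iota 0 w2])
    ((if y1_late then [::] else Y1) ++ seg 2 0 w2 ++ seg 2 1 w2).
  by rewrite -flatten_zmid; apply: perm_colblocks.
have perm_t : perm_eq (flatten [seq colblock 3 c [::] | c <- iota 0 r2])
    (seg 3 0 r2 ++ seg 3 1 r2).
  have := perm_colblocks 3 (fun=> [::]) (iota 0 r2).
  by rewrite (flatten_map_nil (f := fun _ => [::])).
have seg_z : seg 2 0 (w1 + w2) = seg 2 0 w2 ++ Zs by rewrite /seg addnC iotaD map_cat.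
have seg_t : seg 3 0 (r1 + r2) = seg 3 0 r2 ++ Ts by rewrite /seg addnC iotaD map_cat.
apply/seq.permP => P; move: (seq.permP perm_tail P) (seq.permP perm_z P) (seq.permP perm_t P).
rewrite cellsL -/Y1 seg_z seg_t /word /col_blocks !flatten_cat flatten_seq1 !count_cat.
by case: y1_late => /=; lia.
Qed.

Lemma cells_gt0 : 0 < n.
Proof. by rewrite cellsL !size_cat /seg !size_map !size_iota; lia. Qed.

Definition idx (x : cell) : 'I_n := insubd (Ordinal cells_gt0) (index x cs).

Lemma idxK x : x \in cs -> mcell (idx x) = x.
Proof. by move=> x_cs; rewrite /mcell val_insubd index_mem x_cs nth_index. Qed.

Lemma mcell_inj : injective (@mcell L).
Proof. by move=> i j /eqP; rewrite nth_uniq ?cells_uniq // => /eqP /val_inj. Qed.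

Lemma mcellK i : idx (mcell i) = i.
Proof. by apply: mcell_inj; rewrite idxK ?mem_nth. Qed.

Lemma word_idx_inj : injective (fun k : 'I_n => nth (Ordinal cells_gt0) (map idx word) k).
Proof.
have size_w : size (map idx word) = n by rewrite size_map (perm_size perm_word).
have uniq_w : uniq (map idx word).
  rewrite map_inj_in_uniq ?(perm_uniq perm_word) ?cells_uniq // => x y.
  by rewrite !(perm_mem perm_word) => x_cs y_cs /(congr1 (@mcell L)); rewrite !idxK.
by move=> k l /eqP; rewrite nth_uniq ?size_w // => /eqP /val_inj.
Qed.

Definition word_perm : {perm 'I_n} := perm word_idx_inj.

Lemma prod_word_perm (R : pzSemiRingType) (G : 'I_n -> R) :
  (\prod_(k < n) G (word_perm k) = \prod_(x <- word) G (idx x))%R.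
Proof.
rewrite -(big_map idx xpredT) (big_nth (Ordinal cells_gt0)) size_map (perm_size perm_word).
by rewrite big_mkord; apply: eq_bigr => k _; rewrite permE.
Qed.

Variable F : fieldType.
Local Open Scope ring_scope.
Local Notation e22 := (em F 1 1).
Local Notation e21 := (em F 1 0).

Definition tabsubst (i : 'I_n) : 'M[F]_3 := tabval F (mkind i) (mcell i).1.2.

Lemma tabsubst_idx x : x \in cs -> tabsubst (idx x) = tabval F x.1.1 x.1.2.
Proof. by move=> x_cs; rewrite /tabsubst /mkind idxK. Qed.

Lemma tabsubst_rowG p i : p \in mRowG L -> tabsubst (p i) = tabsubst i.
Proof. by rewrite inE => /forallP /(_ i) /eqP; rewrite /tabsubst /mkind /mrow => -[-> ->]. Qed.

Definition qrow (q : {perm 'I_n}) (x : cell) : nat := (mcell (q (idx x))).1.2.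

Lemma colG_cell q i : q \in mColG L ->
  (mcell (q i)).1.1 = (mcell i).1.1 /\ (mcell (q i)).2 = (mcell i).2.
Proof. by rewrite inE => /forallP /(_ i) /eqP [-> ->]. Qed.

Lemma colG_idx q x : q \in mColG L -> x \in cs -> mcell (q (idx x)) = (x.1.1, qrow q x, x.2).
Proof.
move=> qC x_cs; have [] := colG_cell (idx x) qC; rewrite idxK // /qrow.
by case: (mcell _) => [[j r] c] /= -> ->; case: x {x_cs}.
Qed.

Lemma tabsubst_colG q x : q \in mColG L -> x \in cs ->
  tabsubst (q (idx x)) = tabval F x.1.1 (qrow q x).
Proof. by move=> qC x_cs; rewrite /tabsubst /mkind colG_idx. Qed.

Lemma qrow_pair q j c : q \in mColG L -> (j, 0, c) \in cs -> (j, 1, c) \in cs ->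
  qrow q (j, 0, c) = 0 -> qrow q (j, 1, c) != 0.
Proof.
move=> qC x0_cs x1_cs q_x0; apply/negP => /eqP q_x1.
have : mcell (q (idx (j, 0, c))) = mcell (q (idx (j, 1, c))).
  by rewrite !colG_idx //= q_x0 q_x1.
by move/mcell_inj/perm_inj/(congr1 (@mcell L)); rewrite !idxK.
Qed.

Lemma colG_neq1_moves_top q : q \in mColG L -> q != 1%g ->
  exists j c, [/\ (j, 0, c) \in cs, (j, 1, c) \in cs & qrow q (j, 0, c) != 0].
Proof.
move=> qC q_neq1.
have : ~~ [forall i, q i == i].
  by apply: contra q_neq1 => /forallP q_fix; apply/eqP/permP => i; rewrite perm1; apply/eqP.
rewrite negb_forall => /existsP [i qi_neq].
have [same_j same_c] := colG_cell i qC.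
have x_cs : mcell i \in cs := mem_nth _ (ltn_ord i).
have y_cs : mcell (q i) \in cs := mem_nth _ (ltn_ord (q i)).
have row_neq : (mcell i).1.2 != (mcell (q i)).1.2.
  apply: contra qi_neq => /eqP same_r; apply/eqP/mcell_inj.
  move: same_j same_c same_r.
  by case: (mcell i) => [[? ?] ?]; case: (mcell _) => [[? ?] ?] /= -> -> ->.
have qrow_i : qrow q (mcell i) = (mcell (q i)).1.2 by rewrite /qrow mcellK.
move: x_cs y_cs row_neq (cells_row_le1 x_cs) (cells_row_le1 y_cs) qrow_i same_j same_c.
case: (mcell i) => [[j r] c]; case: (mcell (q i)) => [[j' r'] c'] /=.
move=> x_cs y_cs r_neq r_le1 r'_le1 qrow_x j_eq c_eq; rewrite {}j_eq {}c_eq in y_cs.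
exists j, c; case: r r' r_neq r_le1 r'_le1 x_cs y_cs qrow_x => [|[|//]] [|[|//]] // _ _ _.
  by move=> x_cs y_cs ->.
move=> x_cs y_cs qrow_x; split => //.
by apply: contraPneq qrow_x => /(qrow_pair qC y_cs x_cs)/eqP.
Qed.

Lemma Y1_cells y : y \in Y1 -> [/\ y \in cs, y.1.1 = 0%N & y.1.2 = 1%N].
Proof.
move=> y_Y1; rewrite cellsL !mem_cat y_Y1 orbT.
by move: y_Y1; rewrite mem_seg => /and3P [/eqP -> /eqP -> _].
Qed.

Lemma colblock_cells j c : (j == 2%N) && (c < w2)%N || (j == 3%N) && (c < r2)%N ->
  j \in [:: 2; 3]%N /\ (j, 0, c) \in cs /\ (j, 1, c) \in cs.
Proof. by rewrite !inE !mem_cells /=; case: j => [|[|[|[|j]]]] //= lt_c; lia. Qed.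

Lemma mem_col_blocks u : u \in col_blocks ->
  (exists2 x, x \in seg 0 0 A & u = [:: x]) \/
  exists j c mid, [/\ u = colblock j c mid, {subset mid <= Y1} &
                      (j == 2%N) && (c < w2)%N || (j == 3%N) && (c < r2)%N].
Proof.
rewrite !mem_cat => /or3P [/mapP [x x_Y0 ->]|/mapP [c]|/mapP [c]]; [by left; exists x|..];
  rewrite mem_iota add0n => lt_c ->; right.
- by exists 2%N, c, (zmid c); split; rewrite ?eqxx ?lt_c // /zmid => y; case: ifP.
- by exists 3%N, c, [::]; split; rewrite ?lt_c ?orbT.
Qed.

Lemma prod_colblock (G : cell -> 'M[F]_3) j c mid :
  \prod_(x <- colblock j c mid) G x = G (j, 0, c) * \prod_(y <- mid) G y * G (j, 1, c).
Proof. by rewrite big_cons big_cat big_seq1 !mulrA. Qed.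

Lemma Y1_eig q s : q \in mColG L -> {subset s <= Y1} ->
  exists c, e21 * \prod_(y <- s) tabsubst (q (idx y)) = c *: e21.
Proof.
move=> qC sY1; have [c _ ->] : exists2 c, predT c &
    e21 * \prod_(y <- s) tabsubst (q (idx y)) = c *: e21.
  apply: left_eig_prod => // y /sY1 /Y1_cells [y_cs y_j _].
  by rewrite tabsubst_colG // y_j e21_tabval0; eexists.
by exists c.
Qed.

Lemma Y1_fix s : {subset s <= Y1} -> e21 * \prod_(y <- s) tabsubst (idx y) = e21.
Proof.
move=> sY1; have [c /eqP -> ->] : exists2 c, c == 1 &
    e21 * \prod_(y <- s) tabsubst (idx y) = c *: e21.
  apply: left_eig_prod => [||y /sY1 /Y1_cells [y_cs y_j y_r]] //.
    by move=> a b /eqP -> /eqP ->; rewrite mulr1.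
  by exists 1; rewrite // tabsubst_idx // y_j y_r e21_tabval0 scale1r.
by rewrite scale1r.
Qed.

Lemma block_eig q u : q \in mColG L -> u \in col_blocks ->
  exists c, e22 * \prod_(x <- u) tabsubst (q (idx x)) = c *: e22.
Proof.
move=> qC /mem_col_blocks [[x x_Y0 ->]|[j [c [mid [-> midY1 j_c]]]]].
  have x_cs : x \in cs by rewrite cellsL mem_cat x_Y0.
  move: x_Y0; rewrite mem_seg => /and3P [/eqP x_j _ _].
  by rewrite big_seq1 tabsubst_colG // x_j e22_tabval0; eexists.
have [j23 [x0_cs x1_cs]] := colblock_cells j_c.
rewrite prod_colblock !tabsubst_colG //=.
case q_x0: (qrow q (j, 0, c)) => [|r].
  2: by exists 0; rewrite !mulrA e22_tabvalS !mul0r scale0r.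
have := qrow_pair qC x0_cs x1_cs q_x0; case: (qrow q (j, 1, c)) => // r _.
have [d e21_mid] := Y1_eig qC midY1.
by rewrite (e22_colblock _ j23 e21_mid); eexists.
Qed.

Lemma block_kill q : q \in mColG L -> q != 1%g ->
  exists2 u, u \in col_blocks & e22 * \prod_(x <- u) tabsubst (q (idx x)) = 0.
Proof.
move=> qC /(colG_neq1_moves_top qC) [j [c [x0_cs x1_cs]]].
case q_x0: (qrow q (j, 0, c)) => [|r] // _.
have kill_head mid : e22 * \prod_(x <- (j, 0, c) :: mid) tabsubst (q (idx x)) = 0.
  by rewrite big_cons mulrA tabsubst_colG //= q_x0 e22_tabvalS mul0r.
have [[j0 lt_c]|[j0 lt_c]|[j0 lt_c]] := cells_row1 x1_cs; subst j.
- exists [:: (0, 0, c)]%N; last exact: kill_head.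
  rewrite !mem_cat; apply/or3P; constructor 1; apply/map_f.
  by move: x0_cs; rewrite mem_cells mem_seg /=; lia.
- exists (colblock 2 c (zmid c)); last exact: kill_head.
  by rewrite !mem_cat; apply/or3P; constructor 2; apply/map_f; rewrite mem_iota.
- exists (colblock 3 c [::]); last exact: kill_head.
  by rewrite !mem_cat; apply/or3P; constructor 3; apply/map_f; rewrite mem_iota.
Qed.

Lemma block_eig1 u : u \in col_blocks ->
  exists2 c, c != 0 & e22 * \prod_(x <- u) tabsubst (idx x) = c *: e22.
Proof.
move=> /mem_col_blocks [[x x_Y0 ->]|[j [c [mid [-> midY1 j_c]]]]].
  have x_cs : x \in cs by rewrite cellsL mem_cat x_Y0.
  move: x_Y0; rewrite mem_seg => /and3P [/eqP x_j /eqP x_r _].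
  by exists 1; rewrite ?oner_eq0 // big_seq1 tabsubst_idx // x_j x_r e22_tabval0 scale1r.
have [j23 [x0_cs x1_cs]] := colblock_cells j_c.
rewrite prod_colblock !tabsubst_idx //= (e22_colblock (d := 1) _ j23); last first.
  by rewrite scale1r Y1_fix.
by eexists; last reflexivity; rewrite mulr1; case: ifP; rewrite ?oppr_eq0 oner_eq0.
Qed.

Lemma Zs_val x : x \in Zs -> tabsubst (idx x) = tabval F 2 0.
Proof.
move=> /mapP [c]; rewrite mem_iota => /andP [_ lt_c] ->.
by rewrite tabsubst_idx // mem_cells /=; lia.
Qed.

Lemma Ts_val x : x \in Ts -> tabsubst (idx x) = tabval F 3 0.
Proof.
move=> /mapP [c]; rewrite mem_iota => /andP [_ lt_c] ->.
by rewrite tabsubst_idx // mem_cells /=; lia.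
Qed.

Definition jX := if (r1 <= w1)%N then 2%N else 3%N.
Definition jY := if (r1 <= w1)%N then 3%N else 2%N.

Lemma jXY : (jX, jY) \in [:: (2, 3); (3, 2)]%N.
Proof. by rewrite /jX /jY; case: ifP. Qed.

Lemma Xs_val : {in Xs, forall x, tabsubst (idx x) = tabval F jX 0}.
Proof. by rewrite /Xs /jX; case: ifP => _ x; [apply: Zs_val | apply: Ts_val]. Qed.

Lemma Ys_val : {in Ys, forall y, tabsubst (idx y) = tabval F jY 0}.
Proof. by rewrite /Ys /jY; case: ifP => _ y; [apply: Ts_val | apply: Zs_val]. Qed.

Lemma size_Xs : size Xs = maxn w1 r1.
Proof. by rewrite /Xs /Zs /Ts; case: ifP => ?; rewrite size_map size_iota; lia. Qed.

Lemma size_Ys : size Ys = minn w1 r1.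
Proof. by rewrite /Ys /Zs /Ts; case: ifP => ?; rewrite size_map size_iota; lia. Qed.

Hypotheses (w1_le : (w1 <= r1 + 2)%N) (r1_le : (r1 <= w1 + 2)%N).

Lemma tail_neq0 : 2%:R != 0 :> F -> e22 * \prod_(x <- tail) tabsubst (idx x) != 0.
Proof.
move=> two_neq0; have := size_Xs; rewrite /tail.
case: Xs Xs_val => [_ /= max0|x Xs' X_val /= size_X].
  have [w1_0 r1_0] : w1 = 0%N /\ r1 = 0%N by lia.
  have -> : Ys = [::] by apply/size0nil; rewrite size_Ys w1_0 r1_0.
  by rewrite /y1_late w1_0 r1_0 /= big_nil mulr1 em_neq0.
have -> : y1_late by rewrite /y1_late; lia.
have jX23 : jX \in [:: 2; 3]%N by move: jXY; rewrite !inE => /orP [] /eqP [->].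
rewrite /= take0 drop0 /= big_cons big_cat.
rewrite (prod_interleave (G := fun x => tabsubst (idx x)) (X := tabval F jX 0)
  (Y := tabval F jY 0)); last 2 first.
- by move=> x' x'_X; apply/X_val/mem_behead.
- exact: Ys_val.
rewrite X_val ?mem_head // !mulrA e22_tabval_odd0 // -!scalerAl Y1_fix //.
rewrite scaler_eq0 negb_or -!mulrA e21_alternating_neq0 ?jXY ?andbT //.
  by case: ifP; rewrite ?oppr_eq0 oner_eq0.
by move: size_X size_Ys; set a := size Xs'; set b := size Ys; lia.
Qed.

Lemma word_kill q : q \in mColG L -> q != 1%g ->
  e22 * \prod_(x <- word) tabsubst (q (idx x)) = 0.
Proof.
move=> qC q_neq1; rewrite big_cat big_flatten /= mulrA.
rewrite (left_eig_prod_eq0 (e := e22) (W := fun u => \prod_(x <- u) tabsubst (q (idx x)))).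
- by rewrite mul0r.
- by move=> u; apply: block_eig.
- exact: block_kill.
Qed.

Lemma word_neq0 : 2%:R != 0 :> F -> e22 * \prod_(x <- word) tabsubst (idx x) != 0.
Proof.
move=> two_neq0; rewrite big_cat big_flatten /= mulrA.
have [c c_neq0 ->] : exists2 c, c != 0 &
    e22 * \prod_(u <- col_blocks) \prod_(x <- u) tabsubst (idx x) = c *: e22.
  apply: left_eig_prod => [||u /block_eig1] //; first exact: oner_neq0.
  by move=> a b; apply: mulf_neq0.
by rewrite -scalerAl scaler_eq0 negb_or c_neq0 tail_neq0.
Qed.

Lemma e22_myoung_word_neq0 : [pchar F] =i pred0 ->
  e22 * ml_eval (myoung (ml_monomial F word_perm)) tabsubst != 0.
Proof.
move=> charF0; have nat_neq0 k : (0 < k)%N -> k%:R != 0 :> F.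
  by move=> k_gt0; rewrite (pcharf0P F).1 // -lt0n.
have one_rowG : (1%g : {perm 'I_n}) \in mRowG L.
  by rewrite inE; apply/forallP => i; rewrite perm1.
have one_colG : (1%g : {perm 'I_n}) \in mColG L.
  by rewrite inE; apply/forallP => i; rewrite perm1.
rewrite ml_eval_myoung => [|p i]; last exact: tabsubst_rowG.
rewrite mulrnAr -scaler_nat scaler_eq0 negb_or nat_neq0 /=; last first.
  by rewrite card_gt0; apply/set0Pn; exists 1%g.
rewrite mulr_sumr (bigD1 1%g) //= big1 ?addr0 => [|q /andP [qC q_neq1]].
  rewrite odd_perm1 expr0 scale1r ml_eval_monomial.
  rewrite (prod_word_perm (fun i => tabsubst ((1%g : {perm 'I_n}) i))).
  by under eq_bigr do rewrite /= perm1; apply/word_neq0/nat_neq0.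
rewrite -scalerAr ml_eval_monomial (prod_word_perm (fun i => tabsubst (q i))).
by rewrite word_kill ?scaler0.
Qed.

End Monomial.

Unset Implicit Arguments.

Theorem proposition5p5 (F : fieldType) (charF0 : [pchar F]%R =i pred0)
    (lam1 : seq nat) (w1 w2 r1 r2 : nat) :
  is_partition lam1 -> (size lam1 <= 2)%N ->
  (0 < w1 + w2)%N -> (0 < r1 + r2)%N ->
  (w1 <= r1 + 2)%N -> (r1 <= w1 + 2)%N ->
  star_mult F [:: lam1; [::]; two_part w1 w2; two_part r1 r2] != 0%N.
Proof.
(* The argument never uses that [lam1] is a partition. *)
move=> _ lam1_le2 w_gt0 r_gt0 w1_le r1_le.
have cellsL := mcells_two_rows lam1_le2 w_gt0 r_gt0.
have e22_neq0 := e22_myoung_word_neq0 cellsL w_gt0 w1_le r1_le charF0.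
rewrite -lt0n; apply: (star_mult_gt0 (f := ml_monomial F (word_perm cellsL w_gt0))
  (a := tabsubst F)) => [i|]; first exact: in_part_tabval.
by apply: contraNneq e22_neq0 => ->; rewrite GRing.mulr0.
Qed.
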